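(* Let $\alpha$ be a unit speed Frenet curve in $\mathbb{E}^3$ and $\beta$ an osculating mate of $\alpha$ with unit tangent $\bar T$. The following are equivalent: (i) the tangent indicatrix $\bar T$ of $\beta$ is a general helix; (ii) $\beta$ is a slant helix; (iii) $\alpha$ is a general helix.
   Context: $\alpha:I\to\mathbb{E}^3$ is parametrized by arclength $s$, with Frenet frame $\{T,N,B\}$, curvature $\kappa>0$, torsion $\tau$. An osculating mate of $\alpha$ is a curve $\beta(s)=\int(x_1T+x_2N)ds$ with smooth $x_1,x_2$, $x_1^2+x_2^2=1$ and $\beta''\perp\mathrm{span}\{T,N\}$; $\beta$ is assumed to be a Frenet curve, unit speed in $s$, with Frenet frame $\{\bar T,\bar N,\bar B\}$. The tangent indicatrix of $\beta$ is the spherical curve $s\mapsto\bar T(s)$. A general helix is a curve whose tangent makes a constant angle with a fixed direction (equivalently, the ratio torsion/curvature is constant). A slant helix is a curve whose principal normal makes a constant angle with a fixed direction (equivalently $\frac{k^2}{(k^2+t^2)^{3/2}}(t/k)'$ is constant, $k,t$ its curvature and torsion). *)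

From Stdlib Require Import Reals.
From Coquelicot Require Import Coquelicot.
Open Scope R_scope.

Definition V3 : Type := (R * R * R)%type.
Definition vx (v : V3) : R := fst (fst v).
Definition vy (v : V3) : R := snd (fst v).
Definition vz (v : V3) : R := snd v.
Definition mkV (x y z : R) : V3 := (x, y, z).

Definition vadd (u v : V3) : V3 := mkV (vx u + vx v) (vy u + vy v) (vz u + vz v).
Definition vscal (k : R) (v : V3) : V3 := mkV (k * vx v) (k * vy v) (k * vz v).
Definition dot (u v : V3) : R := vx u * vx v + vy u * vy v + vz u * vz v.
Definition vnorm (v : V3) : R := sqrt (dot v v).
Definition cross (u v : V3) : V3 :=
  mkV (vy u * vz v - vz u * vy v) (vz u * vx v - vx u * vz v) (vx u * vy v - vy u * vx v).
Definition vzero : V3 := mkV 0 0 0.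

Definition oint (a b : Rbar) (s : R) : Prop := Rbar_lt a s /\ Rbar_lt s b.

Definition smooth_on (I : R -> Prop) (f : R -> R) : Prop :=
  forall (n : nat) (s : R), I s -> ex_derive_n f n s.

Definition smooth_curve_on (I : R -> Prop) (c : R -> V3) : Prop :=
  smooth_on I (fun s => vx (c s)) /\ smooth_on I (fun s => vy (c s)) /\
  smooth_on I (fun s => vz (c s)).

Definition dcurve (c : R -> V3) (s : R) : V3 :=
  mkV (Derive (fun t => vx (c t)) s) (Derive (fun t => vy (c t)) s)
      (Derive (fun t => vz (c t)) s).

(** Frenet apparatus of a unit speed curve c. *)
Definition Tan (c : R -> V3) : R -> V3 := dcurve c.
Definition curv (c : R -> V3) (s : R) : R := vnorm (dcurve (Tan c) s).
Definition Nor (c : R -> V3) (s : R) : V3 := vscal (/ curv c s) (dcurve (Tan c) s).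
Definition Binor (c : R -> V3) (s : R) : V3 := cross (Tan c s) (Nor c s).
Definition tors (c : R -> V3) (s : R) : R := - dot (dcurve (Binor c) s) (Nor c s).

Definition frenet_curve (I : R -> Prop) (c : R -> V3) : Prop :=
  smooth_curve_on I c /\
  (forall s, I s -> vnorm (dcurve c s) = 1) /\
  (forall s, I s -> curv c s > 0).

Definition osculating_mate (I : R -> Prop) (alpha beta : R -> V3) : Prop :=
  exists x1 x2 : R -> R,
    smooth_on I x1 /\ smooth_on I x2 /\
    (forall s, I s -> x1 s ^ 2 + x2 s ^ 2 = 1) /\
    (forall s, I s ->
        dcurve beta s = vadd (vscal (x1 s) (Tan alpha s)) (vscal (x2 s) (Nor alpha s))) /\
    (forall s, I s -> dot (dcurve (dcurve beta) s) (Tan alpha s) = 0) /\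
    (forall s, I s -> dot (dcurve (dcurve beta) s) (Nor alpha s) = 0) /\
    frenet_curve I beta.

(** General helix (for a regular curve, not necessarily unit speed): its unit
    tangent makes a constant angle with a fixed (unit) direction. *)
Definition general_helix (I : R -> Prop) (g : R -> V3) : Prop :=
  (forall s, I s -> dcurve g s <> vzero) /\
  exists (u : V3) (c : R), vnorm u = 1 /\
    forall s, I s -> dot (vscal (/ vnorm (dcurve g s)) (dcurve g s)) u = c.

Definition slant_helix (I : R -> Prop) (g : R -> V3) : Prop :=
  exists (u : V3) (c : R), vnorm u = 1 /\
    forall s, I s -> dot (Nor g s) u = c.

From Stdlib Require Import Reals Lra Nsatz Classical.
From Coquelicot Require Import Coquelicot.
Open Scope R_scope.

(* Since β'' ⊥ T_α, N_α, the principal normal N_β is orthogonal to T_α and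
   N_α. Differentiating these relations and |N_β| = 1 shows that N_β' is a
   multiple λ N_α, and λ ≠ 0 because N_β'·T_β = -κ_β. So for a fixed direction
   u, N_β·u is constant iff N_α·u vanishes identically, iff T_α·u is constant
   (as T_α' = κ_α N_α with κ_α > 0): this is (ii) ⇔ (iii). For (i) ⇔ (ii),
   the unit tangent of the tangent indicatrix T_β is N_β by definition. *)

Lemma dot_comm u v : dot u v = dot v u.
Proof. unfold dot; ring. Qed.

Lemma dot_scal_l k u v : dot (vscal k u) v = k * dot u v.
Proof. unfold dot, vscal, mkV, vx, vy, vz; simpl; ring. Qed.

Lemma dot_scal_r k u v : dot u (vscal k v) = k * dot u v.
Proof. unfold dot, vscal, mkV, vx, vy, vz; simpl; ring. Qed.

Lemma dot_ge0 v : 0 <= dot v v.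
Proof. unfold dot; nra. Qed.

Lemma dot_vnorm v : dot v v = vnorm v * vnorm v.
Proof. unfold vnorm; rewrite sqrt_sqrt; [reflexivity | apply dot_ge0]. Qed.

Lemma vnorm_gt0_dot v : 0 < vnorm v -> 0 < dot v v.
Proof. rewrite dot_vnorm; nra. Qed.

Lemma vnorm_vzero : vnorm vzero = 0.
Proof.
  unfold vnorm, dot, vzero, mkV, vx, vy, vz; simpl.
  replace (0 * 0 + 0 * 0 + 0 * 0) with 0 by ring; exact sqrt_0.
Qed.

Lemma vscal1 v : vscal 1 v = v.
Proof.
  destruct v as [[x y] z]; unfold vscal, mkV, vx, vy, vz; simpl.
  f_equal; [f_equal |]; ring.
Qed.

Lemma vscalKV k v : k <> 0 -> vscal k (vscal (/ k) v) = v.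
Proof.
  intros k0; destruct v as [[x y] z]; unfold vscal, mkV, vx, vy, vz; simpl.
  f_equal; [f_equal |]; field; exact k0.
Qed.

(* The orthogonal complement of the orthonormal pair T, n is the line spanned
   by the unit vector N. *)
Lemma dot_orthonormal_complement (T n N v u : V3) :
  dot T T = 1 -> dot n n = 1 -> dot T n = 0 ->
  dot N N = 1 -> dot N T = 0 -> dot N n = 0 ->
  dot v T = 0 -> dot v n = 0 ->
  dot v u = dot v N * dot N u.
Proof.
  destruct T as [[? ?] ?], n as [[? ?] ?], N as [[? ?] ?], v as [[? ?] ?], u as [[? ?] ?].
  unfold dot, mkV, vx, vy, vz; simpl; intros.
  nsatz.
Qed.

Definition is_derive_curve (c : R -> V3) (s : R) (d : V3) : Prop :=
  is_derive (fun t => vx (c t)) s (vx d) /\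
  is_derive (fun t => vy (c t)) s (vy d) /\
  is_derive (fun t => vz (c t)) s (vz d).

Lemma is_derive_curve_dcurve c s :
  ex_derive (fun t => vx (c t)) s -> ex_derive (fun t => vy (c t)) s ->
  ex_derive (fun t => vz (c t)) s -> is_derive_curve c s (dcurve c s).
Proof. intros Hx Hy Hz; repeat split; apply Derive_correct; assumption. Qed.

Lemma Derive_n_iter_dcurve (p : V3 -> R) :
  (forall c t, p (dcurve c t) = Derive (fun t => p (c t)) t) ->
  forall k c t, p (Nat.iter k dcurve c t) = Derive_n (fun t => p (c t)) k t.
Proof.
  intros p_dcurve k c; induction k as [| k IH]; intro t; [reflexivity |].
  simpl; rewrite p_dcurve; apply Derive_ext; exact IH.
Qed.

Lemma ex_derive_iter_dcurve I c (p : V3 -> R) k s :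
  (forall c t, p (dcurve c t) = Derive (fun t => p (c t)) t) ->
  smooth_on I (fun t => p (c t)) -> I s ->
  ex_derive (fun t => p (Nat.iter k dcurve c t)) s.
Proof.
  intros p_dcurve smooth_p Is.
  eapply ex_derive_ext; [| exact (smooth_p (S k) s Is)].
  intro t; symmetry; apply (Derive_n_iter_dcurve p p_dcurve).
Qed.

Lemma smooth_is_derive_curve_iter I c k s : smooth_curve_on I c -> I s ->
  is_derive_curve (Nat.iter k dcurve c) s (Nat.iter (S k) dcurve c s).
Proof.
  intros [Sx [Sy Sz]] Is.
  apply is_derive_curve_dcurve; eapply ex_derive_iter_dcurve; eauto; reflexivity.
Qed.

Lemma is_derive_dot c e s dc de : is_derive_curve c s dc -> is_derive_curve e s de ->
  is_derive (fun t => dot (c t) (e t)) s (dot dc (e s) + dot (c s) de).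
Proof.
  intros [Cx [Cy Cz]] [Ex [Ey Ez]]; unfold dot.
  pose proof (is_derive_mult _ _ s _ _ Cx Ex Rmult_comm) as Dx.
  pose proof (is_derive_mult _ _ s _ _ Cy Ey Rmult_comm) as Dy.
  pose proof (is_derive_mult _ _ s _ _ Cz Ez Rmult_comm) as Dz.
  pose proof (is_derive_plus _ _ s _ _ (is_derive_plus _ _ s _ _ Dx Dy) Dz) as D.
  refine (eq_ind _ (is_derive _ s) D _ _).
  unfold plus, mult; simpl; ring.
Qed.

Lemma is_derive_curve_const (u : V3) s : is_derive_curve (fun _ => u) s vzero.
Proof. split; [| split]; exact (is_derive_const _ _). Qed.

Lemma is_derive_dot_r c s dc u : is_derive_curve c s dc ->
  is_derive (fun t => dot (c t) u) s (dot dc u).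
Proof.
  intro Dc; pose proof (is_derive_dot _ _ _ _ _ Dc (is_derive_curve_const u s)) as D.
  refine (eq_ind _ (is_derive _ s) D _ _).
  unfold dot, vzero, mkV, vx, vy, vz; simpl; ring.
Qed.

Lemma ex_derive_normalize w s dw (p : V3 -> R) :
  is_derive_curve w s dw -> 0 < vnorm (w s) ->
  ex_derive (fun t => p (w t)) s ->
  ex_derive (fun t => / vnorm (w t) * p (w t)) s.
Proof.
  intros Dw w_pos Dp; apply ex_derive_mult; [| exact Dp].
  apply ex_derive_inv; [| apply Rgt_not_eq; exact w_pos].
  eexists; apply is_derive_sqrt; [apply (is_derive_dot _ _ _ _ _ Dw Dw) |].
  apply vnorm_gt0_dot; exact w_pos.
Qed.

Lemma smooth_is_derive_curve_Nor I c s : smooth_curve_on I c -> I s -> 0 < curv c s ->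
  is_derive_curve (Nor c) s (dcurve (Nor c) s).
Proof.
  intros Sc Is k_pos.
  set (w := dcurve (Tan c)).
  assert (Dw : is_derive_curve w s (dcurve w s))
    by exact (smooth_is_derive_curve_iter I c 2 s Sc Is).
  pose proof Dw as [Dx [Dy Dz]].
  apply is_derive_curve_dcurve.
  - exact (ex_derive_normalize w s _ vx Dw k_pos (ex_intro _ _ Dx)).
  - exact (ex_derive_normalize w s _ vy Dw k_pos (ex_intro _ _ Dy)).
  - exact (ex_derive_normalize w s _ vz Dw k_pos (ex_intro _ _ Dz)).
Qed.

Definition constant_on (I : R -> Prop) (f : R -> R) : Prop :=
  exists k, forall s, I s -> f s = k.

Section OpenInterval.

Variables a b : Rbar.

Lemma oint_between x y z : oint a b x -> oint a b y ->
  Rmin x y <= z <= Rmax x y -> oint a b z.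
Proof.
  unfold oint, Rmin, Rmax; destruct (Rle_dec x y);
    destruct a as [ra | |], b as [rb | |]; simpl; intros; lra.
Qed.

Lemma is_derive_constant_on f k s l : oint a b s ->
  (forall t, oint a b t -> f t = k) -> is_derive f s l -> l = 0.
Proof.
  intros [a_s s_b] f_k Df.
  assert (f_loc : locally s (fun t => f t = k)).
  { apply (locally_interval _ s a b a_s s_b); intros; apply f_k; split; assumption. }
  apply is_derive_unique in Df; rewrite <- Df, (Derive_ext_loc _ _ _ f_loc).
  apply Derive_const.
Qed.

Lemma constant_on_iff_derive_eq0 f f' :
  (forall s, oint a b s -> is_derive f s (f' s)) ->
  constant_on (oint a b) f <-> forall s, oint a b s -> f' s = 0.
Proof.
  intros Df; split.
  - intros [k f_k] s Is; exact (is_derive_constant_on f k s _ Is f_k (Df s Is)).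
  - intros f'0; destruct (classic (exists s0, oint a b s0)) as [[s0 Is0] | empty].
    + exists (f s0); intros s Is.
      destruct (MVT_gen f s0 s f') as [z [z_between Hz]].
      * intros x Hx; apply Df, (oint_between s0 s); auto; lra.
      * intros x Hx; apply continuity_pt_filterlim.
        apply (ex_derive_continuous (V := R_NormedModule)).
        exists (f' x); apply Df, (oint_between s0 s); auto.
      * rewrite f'0 in Hz; [lra | apply (oint_between s0 s); auto].
    + exists 0; intros s Is; exfalso; eauto.
Qed.

Lemma constant_on_iff_eq0 f g h :
  (forall s, oint a b s -> is_derive f s (h s * g s)) ->
  (forall s, oint a b s -> h s <> 0) ->
  constant_on (oint a b) f <-> forall s, oint a b s -> g s = 0.
Proof.
  intros Df h_neq0; rewrite (constant_on_iff_derive_eq0 _ _ Df).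
  split; intros H s Is; specialize (H s Is).
  - apply Rmult_integral in H as [h0 | g0]; [contradiction (h_neq0 s Is) | exact g0].
  - rewrite H; apply Rmult_0_r.
Qed.

Lemma is_derive_dot_constant_on c e k s dc de : oint a b s ->
  (forall t, oint a b t -> dot (c t) (e t) = k) ->
  is_derive_curve c s dc -> is_derive_curve e s de ->
  dot dc (e s) + dot (c s) de = 0.
Proof.
  intros Is ce_k Dc De.
  exact (is_derive_constant_on _ k s _ Is ce_k (is_derive_dot _ _ _ _ _ Dc De)).
Qed.

End OpenInterval.

Section FrenetCurve.

Variables (a b : Rbar) (c : R -> V3).
Hypothesis frenet_c : frenet_curve (oint a b) c.

Lemma frenet_is_derive_Tan s : oint a b s ->
  is_derive_curve (Tan c) s (dcurve (Tan c) s).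
Proof. intro Is; exact (smooth_is_derive_curve_iter _ c 1 s (proj1 frenet_c) Is). Qed.

Lemma frenet_is_derive_Nor s : oint a b s ->
  is_derive_curve (Nor c) s (dcurve (Nor c) s).
Proof.
  intro Is; destruct frenet_c as [Sc [_ k_pos]].
  exact (smooth_is_derive_curve_Nor _ c s Sc Is (k_pos s Is)).
Qed.

Lemma frenet_dot_Tan s : oint a b s -> dot (Tan c s) (Tan c s) = 1.
Proof.
  intro Is; destruct frenet_c as [_ [unit_c _]].
  unfold Tan; rewrite dot_vnorm, (unit_c s Is); ring.
Qed.

Lemma frenet_dTan s : oint a b s -> dcurve (Tan c) s = vscal (curv c s) (Nor c s).
Proof.
  intro Is; destruct frenet_c as [_ [_ k_pos]]; specialize (k_pos s Is).
  unfold Nor; rewrite vscalKV; [reflexivity | lra].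
Qed.

Lemma frenet_dot_Nor s : oint a b s -> dot (Nor c s) (Nor c s) = 1.
Proof.
  intro Is; destruct frenet_c as [_ [_ k_pos]]; specialize (k_pos s Is).
  unfold Nor; rewrite dot_scal_l, dot_scal_r, dot_vnorm; fold (curv c s).
  field; lra.
Qed.

Lemma frenet_dot_Nor_Tan s : oint a b s -> dot (Nor c s) (Tan c s) = 0.
Proof.
  intro Is; destruct frenet_c as [_ [_ k_pos]]; specialize (k_pos s Is).
  pose proof (is_derive_dot_constant_on a b (Tan c) (Tan c) 1 s _ _ Is frenet_dot_Tan
    (frenet_is_derive_Tan s Is) (frenet_is_derive_Tan s Is)) as D.
  rewrite frenet_dTan, dot_scal_l, dot_scal_r, (dot_comm (Tan c s)) in D by exact Is.
  nra.
Qed.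

Lemma frenet_dot_Nor_dTan s : oint a b s -> dot (Nor c s) (dcurve (Tan c) s) = curv c s.
Proof. intro Is; rewrite frenet_dTan, dot_scal_r, frenet_dot_Nor by exact Is; ring. Qed.

Lemma constant_dot_Tan_iff u :
  constant_on (oint a b) (fun s => dot (Tan c s) u) <->
  forall s, oint a b s -> dot (Nor c s) u = 0.
Proof.
  apply constant_on_iff_eq0 with (h := curv c).
  - intros s Is; rewrite <- dot_scal_l, <- frenet_dTan by exact Is.
    exact (is_derive_dot_r _ _ _ u (frenet_is_derive_Tan s Is)).
  - intros s Is; destruct frenet_c as [_ [_ k_pos]]; specialize (k_pos s Is); lra.
Qed.

End FrenetCurve.

Section OsculatingMate.

Variables (a b : Rbar) (alpha beta : R -> V3).
Hypothesis frenet_alpha : frenet_curve (oint a b) alpha.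
Hypothesis frenet_beta : frenet_curve (oint a b) beta.
Hypothesis ddbeta_Tan :
  forall s, oint a b s -> dot (dcurve (dcurve beta) s) (Tan alpha s) = 0.
Hypothesis ddbeta_Nor :
  forall s, oint a b s -> dot (dcurve (dcurve beta) s) (Nor alpha s) = 0.

Lemma mate_Nor_Tan s : oint a b s -> dot (Nor beta s) (Tan alpha s) = 0.
Proof. intro Is; unfold Nor at 1; rewrite dot_scal_l, ddbeta_Tan by exact Is; ring. Qed.

Lemma mate_Nor_Nor s : oint a b s -> dot (Nor beta s) (Nor alpha s) = 0.
Proof. intro Is; unfold Nor at 1; rewrite dot_scal_l, ddbeta_Nor by exact Is; ring. Qed.

Lemma mate_dNor_factor s u : oint a b s ->
  dot (dcurve (Nor beta) s) u =
  dot (dcurve (Nor beta) s) (Nor alpha s) * dot (Nor alpha s) u.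
Proof.
  intro Is.
  pose proof (frenet_is_derive_Nor a b beta frenet_beta s Is) as DNb.
  pose proof (is_derive_dot_constant_on a b _ _ 0 s _ _ Is mate_Nor_Tan DNb
    (frenet_is_derive_Tan a b alpha frenet_alpha s Is)) as D_Tan.
  pose proof (is_derive_dot_constant_on a b _ _ 1 s _ _ Is
    (frenet_dot_Nor a b beta frenet_beta) DNb DNb) as D_Nor.
  rewrite (frenet_dTan a b alpha frenet_alpha s Is), dot_scal_r, mate_Nor_Nor in D_Tan
    by exact Is.
  rewrite (dot_comm (Nor beta s)) in D_Nor.
  apply (dot_orthonormal_complement (Tan alpha s) (Nor beta s)).
  - exact (frenet_dot_Tan a b alpha frenet_alpha s Is).
  - exact (frenet_dot_Nor a b beta frenet_beta s Is).
  - rewrite dot_comm; exact (mate_Nor_Tan s Is).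
  - exact (frenet_dot_Nor a b alpha frenet_alpha s Is).
  - exact (frenet_dot_Nor_Tan a b alpha frenet_alpha s Is).
  - rewrite dot_comm; exact (mate_Nor_Nor s Is).
  - lra.
  - lra.
Qed.

Lemma mate_dNor_Nor_neq0 s : oint a b s -> dot (dcurve (Nor beta) s) (Nor alpha s) <> 0.
Proof.
  intros Is dNb_Na0; destruct frenet_beta as [_ [_ k_pos]]; specialize (k_pos s Is).
  pose proof (is_derive_dot_constant_on a b _ _ 0 s _ _ Is
    (frenet_dot_Nor_Tan a b beta frenet_beta)
    (frenet_is_derive_Nor a b beta frenet_beta s Is)
    (frenet_is_derive_Tan a b beta frenet_beta s Is)) as D.
  rewrite (frenet_dot_Nor_dTan a b beta frenet_beta s Is), mate_dNor_factor, dNb_Na0 in D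
    by exact Is.
  lra.
Qed.

Lemma constant_dot_Nor_mate_iff u :
  constant_on (oint a b) (fun s => dot (Nor beta s) u) <->
  forall s, oint a b s -> dot (Nor alpha s) u = 0.
Proof.
  apply constant_on_iff_eq0 with (h := fun s => dot (dcurve (Nor beta) s) (Nor alpha s)).
  - intros s Is; rewrite <- mate_dNor_factor by exact Is.
    exact (is_derive_dot_r _ _ _ u (frenet_is_derive_Nor a b beta frenet_beta s Is)).
  - exact mate_dNor_Nor_neq0.
Qed.

End OsculatingMate.

Lemma general_helix_Tan_iff_slant_helix I c : (forall s, I s -> 0 < curv c s) ->
  general_helix I (Tan c) <-> slant_helix I c.
Proof.
  intro k_pos; split; [intros [_ helix]; exact helix | intro slant].
  split; [| exact slant].
  intros s Is dTan0; specialize (k_pos s Is).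
  unfold curv in k_pos; rewrite dTan0, vnorm_vzero in k_pos; lra.
Qed.

Lemma general_helix_unit_speed_iff I g : (forall s, I s -> vnorm (dcurve g s) = 1) ->
  general_helix I g <-> exists u, vnorm u = 1 /\ constant_on I (fun s => dot (Tan g s) u).
Proof.
  intro unit_g; unfold general_helix, constant_on.
  assert (unit_tangent : forall s, I s ->
    vscal (/ vnorm (dcurve g s)) (dcurve g s) = Tan g s).
  { intros s Is; rewrite unit_g, Rinv_1 by exact Is; apply vscal1. }
  split.
  - intros [_ [u [k [unit_u helix]]]]; exists u; split; [exact unit_u |].
    exists k; intros s Is; rewrite <- unit_tangent by exact Is; exact (helix s Is).
  - intros [u [unit_u [k helix]]]; split.
    + intros s Is dg0; specialize (unit_g s Is); rewrite dg0, vnorm_vzero in unit_g; lra.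
    + exists u, k; split; [exact unit_u |].
      intros s Is; rewrite unit_tangent by exact Is; exact (helix s Is).
Qed.

Lemma slant_helix_iff I g :
  slant_helix I g <-> exists u, vnorm u = 1 /\ constant_on I (fun s => dot (Nor g s) u).
Proof.
  split; [intros [u [k [unit_u H]]] | intros [u [unit_u [k H]]]]; exists u.
  - split; [exact unit_u | exists k; exact H].
  - exists k; split; [exact unit_u | exact H].
Qed.

Theorem theorem14 (a b : Rbar) (alpha beta : R -> V3) :
  frenet_curve (oint a b) alpha ->
  osculating_mate (oint a b) alpha beta ->
  (general_helix (oint a b) (Tan beta) <-> slant_helix (oint a b) beta) /\
  (slant_helix (oint a b) beta <-> general_helix (oint a b) alpha).
Proof.
  intros frenet_alpha [x1 [x2 [_ [_ [_ [_ [ddbeta_Tan [ddbeta_Nor frenet_beta]]]]]]]].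
  split.
  - apply general_helix_Tan_iff_slant_helix; intros s Is; apply frenet_beta, Is.
  - rewrite slant_helix_iff, general_helix_unit_speed_iff by apply frenet_alpha.
    setoid_rewrite (constant_dot_Nor_mate_iff a b alpha beta frenet_alpha frenet_beta
      ddbeta_Tan ddbeta_Nor).
    setoid_rewrite (constant_dot_Tan_iff a b alpha frenet_alpha).
    reflexivity.
Qed.
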